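(* Let $\mathcal{IB}$ be the strict monoidal category whose objects are $\overline 0,\overline 1,\overline 2,\dots$, with $\operatorname{hom}(\overline k,\overline l)=IB_k$ if $k=l$ and empty otherwise, tensor product given on objects by $\overline k\otimes\overline l=\overline{k+l}$ and on morphisms by the pairing $\mu:IB_k\times IB_l\to IB_{k+l}$. For $m,n\ge0$ let $c_{\overline m,\overline n}\in Br_{m+n}\subset IB_{m+n}$ be $$c_{\overline m,\overline n}=\sigma_m\cdots\sigma_1\,\sigma_{m+1}\cdots\sigma_2\cdots\sigma_{n+m-1}\cdots\sigma_n .$$ Then $c$ is a braiding on $\mathcal{IB}$, so $\mathcal{IB}$ is a braided monoidal category, and the functor $\mathcal K:\mathcal B\to\mathcal{IB}$ induced by the inclusions $\kappa_n:Br_n\to IB_n$ is a morphism of braided monoidal categories.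
   Context: $IB_n$ is the inverse braid monoid of partial braids on $n$ strings (braids with some strings deleted, up to isotopy, multiplied by stacking and removing arcs not joining top and bottom), containing $Br_n$ with Artin generators $\sigma_i$; $\epsilon_i$ denotes the trivial braid with $i$-th string deleted. The pairing $\mu:IB_k\times IB_l\to IB_{k+l}$ places the partial braids side by side: $\mu(\sigma_i',e)=\sigma_i$, $\mu(e,\sigma_j'')=\sigma_{j+k}$, $\mu(\epsilon_i',e)=\epsilon_i$, $\mu(e,\epsilon_j'')=\epsilon_{j+k}$, where primes denote generators of $IB_k$ and $IB_l$. $\mathcal B$ is the analogous strict monoidal category with $\operatorname{hom}(\overline k,\overline k)=Br_k$, which is braided (in the sense of Joyal–Street) by the same elements $c_{\overline m,\overline n}$. $\kappa_n:Br_n\to IB_n$ is the canonical inclusion. *)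

(* Braid groups Br_n and inverse braid monoids
   IB_n are given by their standard presentations (Artin; Easdown--Lavers),
   elements being words modulo the congruence generated by the relations.
   Convention: the word  x ++ y  is the stacked partial braid "x first, then y";
   in the category, the word  x ++ y  represents the composite  y \o x. *)
From mathcomp Require Import all_boot.
Set Implicit Arguments. Unset Strict Implicit. Unset Printing Implicit Defensive.

(* BS i = sigma_i, BSi i = sigma_i^{-1}  (1 <= i <= n-1) *)
Inductive bletter := BS of nat | BSi of nat.

Definition bvalid (n : nat) (l : bletter) : bool :=
  match l with BS i | BSi i => (0 < i < n) end.

Inductive brel (n : nat) : seq bletter -> seq bletter -> Prop :=
| b_inv1 i : 0 < i < n -> brel n [:: BS i; BSi i] [::]
| b_inv2 i : 0 < i < n -> brel n [:: BSi i; BS i] [::]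
| b_far i j : 0 < i -> j < n -> i.+1 < j -> brel n [:: BS i; BS j] [:: BS j; BS i]
| b_braid i : 0 < i -> i.+1 < n ->
    brel n [:: BS i; BS i.+1; BS i] [:: BS i.+1; BS i; BS i.+1].

Inductive breq (n : nat) : seq bletter -> seq bletter -> Prop :=
| breq_step u v x y : brel n x y -> breq n (u ++ x ++ v) (u ++ y ++ v)
| breq_refl w : breq n w w
| breq_sym w w' : breq n w w' -> breq n w' w
| breq_trans w1 w2 w3 : breq n w1 w2 -> breq n w2 w3 -> breq n w1 w3.

(* IS i = sigma_i, ISi i = sigma_i^{-1}, IE = epsilon_1 (first string deleted) *)
Inductive IBletter := IS of nat | ISi of nat | IE.

Definition ivalid (n : nat) (l : IBletter) : bool :=
  match l with IS i | ISi i => (0 < i < n) | IE => 0 < n end.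

Inductive ibrel (n : nat) : seq IBletter -> seq IBletter -> Prop :=
| ib_inv1 i : 0 < i < n -> ibrel n [:: IS i; ISi i] [::]
| ib_inv2 i : 0 < i < n -> ibrel n [:: ISi i; IS i] [::]
| ib_far i j : 0 < i -> j < n -> i.+1 < j -> ibrel n [:: IS i; IS j] [:: IS j; IS i]
| ib_braid i : 0 < i -> i.+1 < n ->
    ibrel n [:: IS i; IS i.+1; IS i] [:: IS i.+1; IS i; IS i.+1]
| ib_epscomm i : 1 < i < n -> ibrel n [:: IE; IS i] [:: IS i; IE]
| ib_epsidem : 0 < n -> ibrel n [:: IE; IE] [:: IE]
| ib_epssq1 : 1 < n -> ibrel n [:: IE; IS 1; IS 1] [:: IE]
| ib_epssq2 : 1 < n -> ibrel n [:: IS 1; IS 1; IE] [:: IE]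
| ib_eps1 : 1 < n -> ibrel n [:: IE; IS 1; IE; IS 1] [:: IE; IS 1; IE]
| ib_eps2 : 1 < n -> ibrel n [:: IS 1; IE; IS 1; IE] [:: IE; IS 1; IE].

Inductive ibeq (n : nat) : seq IBletter -> seq IBletter -> Prop :=
| ibeq_step u v x y : ibrel n x y -> ibeq n (u ++ x ++ v) (u ++ y ++ v)
| ibeq_refl w : ibeq n w w
| ibeq_sym w w' : ibeq n w w' -> ibeq n w' w
| ibeq_trans w1 w2 w3 : ibeq n w1 w2 -> ibeq n w2 w3 -> ibeq n w1 w3.

(* epsilon_i (i-th string deleted), i >= 1:
   sigma_{i-1}^{-1} ... sigma_1^{-1} epsilon_1 sigma_1 ... sigma_{i-1} *)
Definition epsw (i : nat) : seq IBletter :=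
  [seq ISi j | j <- rev (iota 1 i.-1)] ++ IE :: [seq IS j | j <- iota 1 i.-1].

Definition shiftI (k : nat) (l : IBletter) : seq IBletter :=
  match l with
  | IS i => [:: IS (i + k)]
  | ISi i => [:: ISi (i + k)]
  | IE => epsw (1 + k)
  end.

Definition muI (k l : nat) (f g : seq IBletter) : seq IBletter :=
  f ++ flatten (map (shiftI k) g).

Definition shiftB (k : nat) (l : bletter) : bletter :=
  match l with BS i => BS (i + k) | BSi i => BSi (i + k) end.

Definition muB (k l : nat) (f g : seq bletter) : seq bletter :=
  f ++ map (shiftB k) g.

Definition kappa_letter (l : bletter) : IBletter :=
  match l with BS i => IS i | BSi i => ISi i end.
Definition kappa (w : seq bletter) : seq IBletter := map kappa_letter w.

Definition cB (m n : nat) : seq bletter :=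
  flatten [seq [seq BS (j + i) | i <- rev (iota 0 m)] | j <- iota 1 n].
Definition cI (m n : nat) : seq IBletter :=
  flatten [seq [seq IS (j + i) | i <- rev (iota 0 m)] | j <- iota 1 n].

Definition IB_strict_monoidal : Prop :=
  [/\ (forall k l f f' g g', all (ivalid k) f -> all (ivalid k) f' ->
         all (ivalid l) g -> all (ivalid l) g' ->
         ibeq k f f' -> ibeq l g g' -> ibeq (k + l) (muI k l f g) (muI k l f' g')),
      (forall k l f g, all (ivalid k) f -> all (ivalid l) g ->
         all (ivalid (k + l)) (muI k l f g)),
      (forall k l f f' g g', all (ivalid k) f -> all (ivalid k) f' ->
         all (ivalid l) g -> all (ivalid l) g' ->
         ibeq (k + l) (muI k l (f ++ f') (g ++ g'))
                      (muI k l f g ++ muI k l f' g')),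
      (forall k l p f g h, all (ivalid k) f -> all (ivalid l) g -> all (ivalid p) h ->
         ibeq (k + l + p) (muI (k + l) p (muI k l f g) h) (muI k (l + p) f (muI l p g h)))
    & (forall k f, all (ivalid k) f ->
         ibeq k (muI 0 k [::] f) f /\ ibeq k (muI k 0 f [::]) f)].

Definition IB_braiding : Prop :=
  [/\ (forall m n, all (ivalid (m + n)) (cI m n)),
      (forall m n, exists d, all (ivalid (m + n)) d /\
         ibeq (m + n) (cI m n ++ d) [::] /\ ibeq (m + n) (d ++ cI m n) [::]),
      (* naturality: c \o (f (x) g) = (g (x) f) \o c *)
      (forall m n f g, all (ivalid m) f -> all (ivalid n) g ->
         ibeq (m + n) (muI m n f g ++ cI m n) (cI m n ++ muI n m g f)),
      (* hexagon 1: c_{X, Y(x)Z} = (id_Y (x) c_{X,Z}) \o (c_{X,Y} (x) id_Z) *)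
      (forall m n p, ibeq (m + n + p) (cI m (n + p))
         (muI (m + n) p (cI m n) [::] ++ muI n (m + p) [::] (cI m p)))
    & (* hexagon 2: c_{X(x)Y, Z} = (c_{X,Z} (x) id_Y) \o (id_X (x) c_{Y,Z}) *)
      (forall m n p, ibeq (m + n + p) (cI (m + n) p)
         (muI m (n + p) [::] (cI n p) ++ muI (m + p) n (cI m p) [::]))].

Definition K_braided_functor : Prop :=
  [/\ (forall n w, all (bvalid n) w -> all (ivalid n) (kappa w)),
      (forall n w w', all (bvalid n) w -> all (bvalid n) w' ->
         breq n w w' -> ibeq n (kappa w) (kappa w')),
      kappa [::] = [::] /\ (forall w w', kappa (w ++ w') = kappa w ++ kappa w'),
      (forall k l f g, all (bvalid k) f -> all (bvalid l) g ->
         ibeq (k + l) (kappa (muB k l f g)) (muI k l (kappa f) (kappa g)))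
    & (forall m n, ibeq (m + n) (kappa (cB m n)) (cI m n))].

(* The crux is that [epsilon_p = sigma_(p-1)^-1 epsilon_(p-1) sigma_(p-1)] satisfies,
   together with [sigma_p], the relations that [epsilon_1] satisfies with [sigma_1]:
   conjugation by [sigma_p sigma_(p+1)] carries the one pair to the next.  Hence
   shifting words by [k] strands respects the relations of IB_l, and shifted words
   commute with words of IB_k, which makes [mu] a strictly associative bifunctor.
   A generator on one side of [c_(m,n)] passes through it block by block (braid and far
   commutation relations, and the conjugation formulas for [epsilon_p]) and emerges
   shifted to the other side, which is naturality; the hexagon identities hold as
   identities of words up to far commutation, and [kappa] acts letterwise. *)

From mathcomp Require Import all_boot zify.
From Stdlib Require Import Setoid Morphisms.
Set Implicit Arguments. Unset Strict Implicit. Unset Printing Implicit Defensive.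
Set Bullet Behavior "Strict Subproofs".

Lemma ibeq_ctx n u v a b : ibeq n a b -> ibeq n (u ++ a ++ v) (u ++ b ++ v).
Proof.
elim=> [u' v' x y H | w | w w' _ IH | w1 w2 w3 _ IH1 _ IH2].
- have -> : u ++ (u' ++ x ++ v') ++ v = (u ++ u') ++ x ++ (v' ++ v) by rewrite !catA.
  have -> : u ++ (u' ++ y ++ v') ++ v = (u ++ u') ++ y ++ (v' ++ v) by rewrite !catA.
  exact: ibeq_step.
- exact: ibeq_refl.
- exact: ibeq_sym.
- exact: ibeq_trans IH2.
Qed.

Add Parametric Relation n : (seq IBletter) (ibeq n)
  reflexivity proved by (@ibeq_refl n)
  symmetry proved by (@ibeq_sym n)
  transitivity proved by (@ibeq_trans n) as ibeq_rel.

Add Parametric Morphism n : (@cat IBletter)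
  with signature ibeq n ==> ibeq n ==> ibeq n as ibeq_cat.
Proof.
move=> a b Hab c d Hcd; transitivity (b ++ c).
- by have := ibeq_ctx [::] c Hab.
- by have := ibeq_ctx b [::] Hcd; rewrite !cats0.
Qed.

Add Parametric Morphism n : (@cons IBletter)
  with signature eq ==> ibeq n ==> ibeq n as ibeq_cons.
Proof. by move=> x a b; apply: (ibeq_cat (ibeq_refl n [:: x])). Qed.

#[local] Hint Resolve ibeq_refl : core.

Lemma ibrel_ibeq n x y : ibrel n x y -> ibeq n x y.
Proof. by move=> H; have := ibeq_step [::] [::] H; rewrite !cats0. Qed.

Lemma ibrel_widen n n' x y : n <= n' -> ibrel n x y -> ibrel n' x y.
Proof.
move=> le; case=> [i|i|i j|i|i|||||] *;
  by constructor; rewrite ?ltnS //; lia.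
Qed.

Lemma ibeq_widen n n' x y : n <= n' -> ibeq n x y -> ibeq n' x y.
Proof.
move=> le; elim=> [u v a b H | w | w w' _ IH | w1 w2 w3 _ IH1 _ IH2].
- exact/ibeq_step/(ibrel_widen le).
- by [].
- by symmetry.
- by rewrite IH1.
Qed.

Lemma ivalid_widen n n' : n <= n' -> forall a, ivalid n a -> ivalid n' a.
Proof. by move=> le; case=> //= *; lia. Qed.

Section Generators.
Variable n : nat.

Lemma IS_ISiK i r : 0 < i < n -> ibeq n (IS i :: ISi i :: r) r.
Proof. by move=> H; have := ibeq_cat (ibrel_ibeq (ib_inv1 H)) (ibeq_refl n r). Qed.

Lemma ISi_ISK i r : 0 < i < n -> ibeq n (ISi i :: IS i :: r) r.
Proof. by move=> H; have := ibeq_cat (ibrel_ibeq (ib_inv2 H)) (ibeq_refl n r). Qed.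

Lemma braid_cons i r : 0 < i -> i.+1 < n ->
  ibeq n (IS i :: IS i.+1 :: IS i :: r) (IS i.+1 :: IS i :: IS i.+1 :: r).
Proof. by move=> H1 H2; have := ibeq_cat (ibrel_ibeq (ib_braid H1 H2)) (ibeq_refl n r). Qed.

Lemma braid_inv_cons i r : 0 < i -> i.+1 < n ->
  ibeq n (IS i :: ISi i.+1 :: ISi i :: r) (ISi i.+1 :: ISi i :: IS i.+1 :: r).
Proof.
move=> h1 h2; transitivity
  (ISi i.+1 :: ISi i :: IS i :: IS i.+1 :: IS i :: ISi i.+1 :: ISi i :: r).
- by rewrite ISi_ISK ?ISi_ISK //; lia.
- by rewrite braid_cons // IS_ISiK ?IS_ISiK //; lia.
Qed.

Lemma conj_ISi i i' X : 0 < i < n -> 0 < i' < n ->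
  ibeq n (IS i :: X) (X ++ [:: IS i']) -> ibeq n (ISi i :: X) (X ++ [:: ISi i']).
Proof.
move=> Hi Hi' H.
transitivity (ISi i :: (X ++ [:: IS i']) ++ [:: ISi i']).
- by rewrite -catA /= IS_ISiK // cats0.
- by rewrite -H /= ISi_ISK.
Qed.

End Generators.

Definition far i j := (i.+1 < j) || (j.+1 < i).

Definition lcomm (a b : IBletter) : bool :=
  match a, b with
  | IE, IE => true
  | IE, IS j | IE, ISi j => 1 < j
  | IS i, IE | ISi i, IE => 1 < i
  | IS i, IS j | IS i, ISi j | ISi i, IS j | ISi i, ISi j => far i j
  end.

Section Commutation.
Variable n : nat.

Lemma far_IS_comm i j : 0 < i < n -> 0 < j < n -> far i j ->
  ibeq n [:: IS i; IS j] [:: IS j; IS i].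
Proof.
move=> Hi Hj /orP[] H.
- by have := ibrel_ibeq (@ib_far n i j ltac:(lia) ltac:(lia) H).
- by symmetry; have := ibrel_ibeq (@ib_far n j i ltac:(lia) ltac:(lia) H).
Qed.

Lemma IE_IS_comm j : 1 < j < n -> ibeq n [:: IE; IS j] [:: IS j; IE].
Proof. by move=> H; have := ibrel_ibeq (ib_epscomm H). Qed.

Lemma lcomm_ibeq a b : ivalid n a -> ivalid n b -> lcomm a b ->
  ibeq n [:: a; b] [:: b; a].
Proof.
have farC i j : far i j = far j i by rewrite /far orbC.
case: a => [i|i|]; case: b => [j|j|] //= Hi Hj H.
- exact: far_IS_comm.
- symmetry; apply: (conj_ISi (X := [:: IS i])) => //.
  by symmetry; apply: far_IS_comm; rewrite // farC.
- by symmetry; apply: IE_IS_comm; lia.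
- by apply: (conj_ISi (X := [:: IS j])) => //; apply: far_IS_comm.
- apply: (conj_ISi (X := [:: ISi j])) => //; symmetry.
  apply: (conj_ISi (X := [:: IS i])) => //.
  by symmetry; apply: far_IS_comm; rewrite // farC.
- apply: (conj_ISi (X := [:: IE])); try lia.
  by symmetry; apply: IE_IS_comm; lia.
- by apply: IE_IS_comm; lia.
- symmetry; apply: (conj_ISi (X := [:: IE])); try lia.
  by symmetry; apply: IE_IS_comm; lia.
Qed.

Lemma lcomm_cons a b r : ivalid n a -> ivalid n b -> lcomm a b ->
  ibeq n (a :: b :: r) (b :: a :: r).
Proof. by move=> Ha Hb H; apply: (ibeq_cat (lcomm_ibeq Ha Hb H)). Qed.

Lemma word_comm u v : all (ivalid n) u -> all (ivalid n) v ->
  all (fun a => all (lcomm a) v) u -> ibeq n (u ++ v) (v ++ u).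
Proof.
move=> + Hv; have letter_comm a : ivalid n a -> all (lcomm a) v ->
    ibeq n (a :: v) (v ++ [:: a]).
  move=> Ha; elim: v Hv => [|b v IHv] //= /andP[Hb Hv] /andP[Hab Hav].
  by rewrite lcomm_cons // IHv.
elim: u => [|a u IH] /=; first by rewrite cats0.
case/andP=> Ha Hu /andP[Hav Huv].
by rewrite IH // -[a :: v ++ u]/((a :: v) ++ u) letter_comm // -catA.
Qed.

End Commutation.

Definition in_range lo hi (a : IBletter) : bool :=
  match a with IS i | ISi i => lo <= i <= hi | IE => false end.

Lemma in_range_widen lo hi lo' hi' w : lo' <= lo -> hi <= hi' ->
  all (in_range lo hi) w -> all (in_range lo' hi') w.
Proof. by move=> h1 h2; apply: sub_all; case=> //= *; lia. Qed.

Lemma in_range_valid n lo hi w : 0 < lo -> hi < n ->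
  all (in_range lo hi) w -> all (ivalid n) w.
Proof. by move=> h1 h2; apply: sub_all; case=> //= *; lia. Qed.

Lemma valid_range_comm n p u v lo hi : p < lo -> hi < n -> p <= n ->
  all (ivalid p) u -> all (in_range lo hi) v -> ibeq n (u ++ v) (v ++ u).
Proof.
move=> h1 h2 h3 Hu Hv; apply: word_comm.
- by apply: sub_all Hu; apply: ivalid_widen; lia.
- by apply: in_range_valid Hv; lia.
- apply: sub_all Hu => a Ha; apply: sub_all Hv => b.
  by case: a Ha => [i|i|] /=; case: b => [j|j|] //= *; rewrite /far; lia.
Qed.

Lemma range_comm n u v lo1 hi1 lo2 hi2 : 0 < lo1 -> hi1 < n -> hi2 < n -> hi1.+1 < lo2 ->
  all (in_range lo1 hi1) u -> all (in_range lo2 hi2) v -> ibeq n (u ++ v) (v ++ u).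
Proof.
move=> h1 h2 h3 h4 Hu; apply: (valid_range_comm (p := hi1.+1)) => //.
exact: in_range_valid Hu.
Qed.

(* Locked so that simplification does not unfold [epsw]. *)
Definition eps p := locked (epsw p).

Lemma epsE p : eps p = epsw p.
Proof. by rewrite /eps; unlock. Qed.

Lemma eps1 : eps 1 = [:: IE].
Proof. by rewrite epsE. Qed.

Lemma epsS p : 0 < p -> eps p.+1 = ISi p :: eps p ++ [:: IS p].
Proof.
rewrite !epsE /epsw; case: p => // p _.
have -> : iota 1 p.+1 = iota 1 p ++ [:: p.+1] by rewrite -[p.+1]addn1 iotaD add1n addn1.
by rewrite !succnK rev_cat !map_cat -!catA.
Qed.

Lemma eps_valid p : 0 < p -> all (ivalid p) (eps p).
Proof.
elim: p => // -[_ _|p IH _]; first by rewrite eps1.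
rewrite epsS //= all_cat /= andbT (sub_all (ivalid_widen (leqnSn _)) (IH isT)).
by lia.
Qed.

Lemma eps_validW n p : 0 < p <= n -> all (ivalid n) (eps p).
Proof. by case/andP=> h1 h2; apply: sub_all (eps_valid h1); apply: ivalid_widen. Qed.

Lemma eps_range_comm n p v lo hi : 0 < p -> p < lo -> hi < n -> p <= n ->
  all (in_range lo hi) v -> ibeq n (eps p ++ v) (v ++ eps p).
Proof. by move=> h0 h1 h2 h3; apply: valid_range_comm h1 h2 h3 (eps_valid h0). Qed.

Lemma eps_IS_comm n p j r : 0 < p -> p < j -> j < n ->
  ibeq n (eps p ++ IS j :: r) (IS j :: eps p ++ r).
Proof.
move=> *; rewrite -[IS j :: r]cat1s catA (@eps_range_comm n p [:: IS j] j j) //=; lia.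
Qed.

Section EpsilonRelations.
Variable n : nat.

(* The last four Easdown--Lavers relations, transported from [epsilon_1, sigma_1]
   to [epsilon_p, sigma_p]. *)
Definition eps_relations p :=
 [/\ ibeq n (eps p ++ [:: IS p] ++ [:: IS p]) (eps p),
     ibeq n ([:: IS p] ++ [:: IS p] ++ eps p) (eps p),
     ibeq n (eps p ++ [:: IS p] ++ eps p ++ [:: IS p]) (eps p ++ [:: IS p] ++ eps p)
   & ibeq n ([:: IS p] ++ eps p ++ [:: IS p] ++ eps p) (eps p ++ [:: IS p] ++ eps p)].

Lemma eps_IS_flipl p r : 0 < p < n ->
  ibeq n (eps p ++ [:: IS p] ++ [:: IS p]) (eps p) ->
  ibeq n (eps p ++ IS p :: r) (eps p ++ ISi p :: r).
Proof.
move=> hp E2; transitivity ((eps p ++ [:: IS p] ++ [:: IS p]) ++ ISi p :: r).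
- by rewrite -catA /= IS_ISiK.
- by rewrite E2.
Qed.

Lemma eps_IS_flipr p r : 0 < p < n ->
  ibeq n ([:: IS p] ++ [:: IS p] ++ eps p) (eps p) ->
  ibeq n (IS p :: eps p ++ r) (ISi p :: eps p ++ r).
Proof.
move=> hp E2; transitivity (ISi p :: ([:: IS p] ++ [:: IS p] ++ eps p) ++ r).
- by rewrite /= ISi_ISK.
- by rewrite E2.
Qed.

Lemma eps_relations1 : 1 < n -> eps_relations 1.
Proof.
move=> h; rewrite /eps_relations eps1 /=; split.
- exact: ibrel_ibeq (ib_epssq1 h).
- exact: ibrel_ibeq (ib_epssq2 h).
- exact: ibrel_ibeq (ib_eps1 h).
- exact: ibrel_ibeq (ib_eps2 h).
Qed.

(* Conjugation by [z = sigma_p sigma_(p+1)] maps [epsilon_p] to [epsilon_(p+1)]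
   and [sigma_p] to [sigma_(p+1)]. *)
Lemma eps_relationsS p : 0 < p -> p.+1 < n -> eps_relations p -> eps_relations p.+1.
Proof.
move=> h1 h2 [Ra Rb Rc Rd].
have hp : 0 < p < n by lia.
set z := [:: IS p; IS p.+1]; set zi := [:: ISi p.+1; ISi p].
have zK r : ibeq n (zi ++ z ++ r) r by rewrite /= !ISi_ISK //; lia.
have conjM a b : ibeq n ((z ++ a ++ zi) ++ (z ++ b ++ zi)) (z ++ (a ++ b) ++ zi).
  by rewrite -!catA zK.
have hE : ibeq n (eps p.+1) (z ++ eps p ++ zi).
  rewrite /z /zi /= -eps_IS_comm; try lia.
  by rewrite IS_ISiK // -(eps_IS_flipl _ hp Ra) (eps_IS_flipr _ hp Rb) epsS.
have hS : ibeq n [:: IS p.+1] (z ++ [:: IS p] ++ zi).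
  by rewrite /z /zi /= braid_cons ?IS_ISiK //; lia.
by split; rewrite hE hS !conjM ?Ra ?Rb ?Rc ?Rd.
Qed.

Lemma eps_relationsP p : 0 < p < n -> eps_relations p.
Proof.
elim: p => // -[_ h|p IH h]; first exact: eps_relations1.
by apply: eps_relationsS; [| lia | apply: IH]; lia.
Qed.

Lemma eps_IS_ISi p r : 0 < p < n -> ibeq n (eps p ++ IS p :: r) (eps p ++ ISi p :: r).
Proof. by move=> hp; case: (eps_relationsP hp) => *; apply: eps_IS_flipl. Qed.

Lemma IS_ISi_eps p r : 0 < p < n -> ibeq n (IS p :: eps p ++ r) (ISi p :: eps p ++ r).
Proof. by move=> hp; case: (eps_relationsP hp) => *; apply: eps_IS_flipr. Qed.

Lemma eps_conj p r : 0 < p < n -> ibeq n (eps p.+1 ++ r) (IS p :: eps p ++ ISi p :: r).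
Proof.
move=> hp; rewrite epsS; last by lia.
by rewrite /= -catA /= -eps_IS_ISi // IS_ISi_eps.
Qed.

Lemma eps_idem p : 0 < p <= n -> ibeq n (eps p ++ eps p) (eps p).
Proof.
elim: p => // -[_ h|p IH h]; first by rewrite eps1; exact: ibrel_ibeq (ib_epsidem h).
by rewrite epsS // /= -catA /= IS_ISiK ?catA ?IH //; lia.
Qed.

Lemma IS_eps_comm i p : 0 < i -> i.+2 <= p -> p <= n ->
  ibeq n (IS i :: eps p) (eps p ++ [:: IS i]).
Proof.
move=> h0; elim: p => // p IH hip hpn.
have hp : 0 < p by lia.
case: (leqP i.+2 p) => h.
- rewrite epsS //= -catA /= lcomm_cons /=; try (rewrite /far; lia); try lia.
  have := ibeq_cat (IH h (ltnW hpn)) (ibeq_refl n [:: IS p]).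
  rewrite /= -catA /= => ->.
  by rewrite lcomm_cons //=; try (rewrite /far; lia); lia.
- have -> : p = i.+1 by lia.
  rewrite epsS // epsS // /= -!catA /= braid_inv_cons -?eps_IS_comm; try lia.
  by rewrite -braid_cons //; lia.
Qed.

Lemma ISi_eps_comm i p : 0 < i -> i.+2 <= p -> p <= n ->
  ibeq n (ISi i :: eps p) (eps p ++ [:: ISi i]).
Proof. by move=> *; apply: conj_ISi; try lia; apply: IS_eps_comm. Qed.

Lemma IE_eps_comm q : 0 < q <= n -> ibeq n (IE :: eps q) (eps q ++ [:: IE]).
Proof.
elim: q => // -[_ _|[_ h|q IH h]]; first by rewrite eps1.
- (* [epsilon_2 = sigma_1^-1 epsilon_1 sigma_1]; next to [epsilon_1] the sign of [sigma_1]
     is irrelevant, so this is the pair of relations [ib_eps1], [ib_eps2]. *)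
  have h1 : 0 < 1 < n by lia.
  rewrite epsS //= eps1 /=.
  transitivity ([:: IE] ++ [:: IS 1] ++ [:: IE] ++ [:: IS 1]).
    by move: (eps_IS_ISi [:: IE; IS 1] h1); rewrite eps1 /= => ->.
  case: (eps_relationsP h1); rewrite eps1 => _ _ -> <-.
  by move: (IS_ISi_eps [:: IS 1; IE] h1); rewrite eps1 /= => ->.
- rewrite epsS //= -catA /= lcomm_cons //=; try lia.
  have := ibeq_cat (IH ltac:(lia)) (ibeq_refl n [:: IS q.+2]).
  rewrite /= -catA /= => ->.
  by rewrite lcomm_cons //=; lia.
Qed.

End EpsilonRelations.

Definition shiftw k (w : seq IBletter) := flatten (map (shiftI k) w).

Lemma muIE k l f g : muI k l f g = f ++ shiftw k g.
Proof. by []. Qed.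

Lemma shiftw_cat k u v : shiftw k (u ++ v) = shiftw k u ++ shiftw k v.
Proof. by rewrite /shiftw map_cat flatten_cat. Qed.

Lemma shiftw_cons k a v : shiftw k (a :: v) = shiftI k a ++ shiftw k v.
Proof. by []. Qed.

Lemma shiftw_valid k l g : all (ivalid l) g -> all (ivalid (k + l)) (shiftw k g).
Proof.
elim: g => //= a g IH /andP[Ha Hg]; rewrite all_cat IH // andbT.
by case: a Ha => [i|i|] /= Ha; rewrite ?andbT -?epsE ?eps_validW; lia.
Qed.

Lemma shiftw_eps k l : shiftw k (eps l.+1) = eps (k + l).+1.
Proof.
elim: l => [|l IH]; first by rewrite eps1 /shiftw /= cats0 addn0 epsE.
rewrite addnS [RHS]epsS ?addn_gt0 ?orbT // epsS // shiftw_cons shiftw_cat IH /=.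
by rewrite /shiftw /= addSn addnC.
Qed.

Lemma shiftw_shiftI k l a : shiftw k (shiftI l a) = shiftI (k + l) a.
Proof.
case: a => [i|i|] /=; last by rewrite -!epsE shiftw_eps.
all: by rewrite /shiftw /= -addnA [l + k]addnC.
Qed.

Lemma shiftwD k l w : shiftw k (shiftw l w) = shiftw (k + l) w.
Proof.
elim: w => //= a w IH.
by rewrite -/(shiftw l w) -/(shiftw (k + l) w) shiftw_cat IH shiftw_shiftI.
Qed.

Lemma shiftw0 w : shiftw 0 w = w.
Proof.
elim: w => //= a w IH; rewrite shiftw_cons IH.
by case: a => [i|i|]; rewrite /= ?addn0 // -epsE eps1.
Qed.

Lemma shiftI_comm k l a b : ivalid k a -> ivalid l b ->
  ibeq (k + l) (a :: shiftI k b) (shiftI k b ++ [:: a]).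
Proof.
case: b => [j|j|] /= Ha Hb; last rewrite -epsE.
- by apply: lcomm_ibeq; case: a Ha Hb => //= *; rewrite ?/far; lia.
- by apply: lcomm_ibeq; case: a Ha Hb => //= *; rewrite ?/far; lia.
- case: a Ha => [i|i|] /= Ha.
  + by apply: IS_eps_comm; lia.
  + by apply: ISi_eps_comm; lia.
  + by apply: IE_eps_comm; lia.
Qed.

Lemma shiftw_comm k l u v : all (ivalid k) u -> all (ivalid l) v ->
  ibeq (k + l) (u ++ shiftw k v) (shiftw k v ++ u).
Proof.
move=> Hu Hv; have letter_comm a : ivalid k a ->
    ibeq (k + l) (a :: shiftw k v) (shiftw k v ++ [:: a]).
  move=> Ha; elim: v Hv => [|b v IH] //= /andP[Hb Hv]; rewrite -/(shiftw k v).
  rewrite -[a :: _ ++ _]/((a :: shiftI k b) ++ shiftw k v) shiftI_comm //.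
  by rewrite -catA /= IH // catA.
elim: u Hu => [|a u IH] /=; first by rewrite cats0.
case/andP=> Ha Hu; rewrite IH //.
by rewrite -[a :: _ ++ _]/((a :: shiftw k v) ++ u) letter_comm // -catA.
Qed.

Lemma shiftw_ibrel k l x y : ibrel l x y -> ibeq (k + l) (shiftw k x) (shiftw k y).
Proof.
have relP : 0 < k.+1 < k + l -> eps_relations (k + l) k.+1 by apply: eps_relationsP.
case=> [i H|i H|i j H1 H2 H3|i H1 H2|i H|H|H|H|H|H]; rewrite /shiftw /= -?epsE ?add1n ?cats0;
  try by [apply: ibrel_ibeq; constructor; lia | case: (relP ltac:(lia)) => *].
- by rewrite eps_IS_comm ?cats0 //; lia.
- by apply: eps_idem; lia.
Qed.

Lemma shiftw_ibeq k l x y : ibeq l x y -> ibeq (k + l) (shiftw k x) (shiftw k y).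
Proof.
elim=> [u v a b H | w | w w' _ IH | w1 w2 w3 _ IH1 _ IH2].
- by rewrite !shiftw_cat (shiftw_ibrel k H).
- by [].
- by symmetry.
- by rewrite IH1.
Qed.

Lemma IB_strict_monoidalP : IB_strict_monoidal.
Proof.
split.
- move=> k l f f' g g' _ _ _ _ Hf Hg; rewrite !muIE.
  by rewrite (ibeq_widen (leq_addr l k) Hf) (shiftw_ibeq k Hg).
- move=> k l f g Hf Hg; rewrite muIE all_cat shiftw_valid // andbT.
  by apply: sub_all Hf; apply: ivalid_widen; rewrite leq_addr.
- move=> k l f f' g g' _ Hf' Hg _; rewrite !muIE shiftw_cat !catA.
  apply: ibeq_cat => //; rewrite -!catA; apply: ibeq_cat => //.
  exact: shiftw_comm.
- by move=> k l p f g h _ _ _; rewrite !muIE shiftw_cat shiftwD catA.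
- by move=> k f _; rewrite !muIE shiftw0 cats0.
Qed.

Definition desc o m := [seq IS (o.+1 + i) | i <- rev (iota 0 m)].

Fixpoint cross o m n :=
  if n is n'.+1 then desc o m ++ cross o.+1 m n' else [::].

Lemma cI_cross m n : cI m n = cross 0 m n.
Proof.
suff gen o : flatten [seq [seq IS (j + i) | i <- rev (iota 0 m)] | j <- iota o.+1 n]
  = cross o m n by apply: gen.
by elim: n o => //= n IH o; rewrite IH.
Qed.

Lemma descS o m : desc o m.+1 = IS (o.+1 + m) :: desc o m.
Proof. by rewrite /desc -[m.+1]addn1 iotaD rev_cat. Qed.

Lemma descSr o m : desc o m.+1 = desc o.+1 m ++ [:: IS o.+1].
Proof.
elim: m => [|m IH]; first by rewrite /desc /= addn0.
by rewrite descS IH descS addnS addSn.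
Qed.

Lemma descD o m n : desc o (m + n) = desc (o + m) n ++ desc o m.
Proof.
elim: n => [|n IH]; first by rewrite addn0.
by rewrite addnS !descS IH addSn addnA.
Qed.

Lemma crossD o m n p : cross o m (n + p) = cross o m n ++ cross (o + n) m p.
Proof. by elim: n o => [|n IH] o /=; rewrite ?addn0 // IH -catA addSnnS. Qed.

Lemma shiftw_desc k o m : shiftw k (desc o m) = desc (o + k) m.
Proof.
elim: m => [|m IH] //; rewrite !descS shiftw_cons IH /=.
by congr (IS _ :: _); lia.
Qed.

Lemma shiftw_cross k o m n : shiftw k (cross o m n) = cross (o + k) m n.
Proof. by elim: n o => [|n IH] o //=; rewrite shiftw_cat shiftw_desc IH addSn. Qed.

Lemma desc_range o m : all (in_range o.+1 (o + m)) (desc o m).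
Proof.
elim: m => [|m IH] //; rewrite descS /= (in_range_widen _ _ IH) //; lia.
Qed.

Lemma cross_range o m n : all (in_range o.+1 (o + m + n).-1) (cross o m n).
Proof.
elim: n o => [|n IH] o //=; rewrite all_cat.
case: m IH => [|m] IH; first by rewrite /= (in_range_widen _ _ (IH o.+1)) //; lia.
by rewrite (in_range_widen _ _ (desc_range o m.+1)) ?(in_range_widen _ _ (IH o.+1)); lia.
Qed.

Lemma cI_valid m n : all (ivalid (m + n)) (cI m n).
Proof. by rewrite cI_cross; apply: sub_all (cross_range 0 m n); case=> //= i; lia. Qed.

Section Naturality.
Variable N : nat.

Lemma slide_cons a w c r : ibeq N (a :: w) (w ++ [:: c]) ->
  ibeq N (a :: w ++ r) (w ++ c :: r).
Proof. by move=> H; have := ibeq_cat H (ibeq_refl N r); rewrite -catA. Qed.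

Lemma IS_below_comm x w lo hi : 0 < x -> x < N -> hi < N -> x.+1 < lo ->
  all (in_range lo hi) w -> ibeq N (IS x :: w) (w ++ [:: IS x]).
Proof. by move=> *; apply: (@range_comm N [:: IS x] w x x lo hi) => //=; lia. Qed.

Lemma IS_above_comm x w lo hi : 0 < lo -> x < N -> hi.+1 < x ->
  all (in_range lo hi) w -> ibeq N (IS x :: w) (w ++ [:: IS x]).
Proof.
by move=> *; symmetry; apply: (@range_comm N w [:: IS x] lo hi x x) => //=; lia.
Qed.

Lemma IS_desc_commL o m i : 0 < i < m -> o + m < N ->
  ibeq N (IS (o + i) :: desc o m) (desc o m ++ [:: IS (o + i).+1]).
Proof.
elim: m => [|m IH] h1 h2; first lia.
rewrite descS; case: (ltnP i m) => h.
- rewrite lcomm_cons /=; try (rewrite /far; lia); try lia.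
  by apply: ibeq_cons => //; apply: IH; lia.
- case: m IH h1 h2 h => [|m] IH h1 h2 h; first lia.
  have -> : i = m.+1 by lia.
  rewrite descS -addSnnS addnS braid_cons; try lia.
  do 2 apply: ibeq_cons => //.
  by apply: IS_above_comm (desc_range o m); lia.
Qed.

Lemma IS_cross_commL o m n i : 0 < i < m -> o + m + n <= N ->
  ibeq N (IS (o + i) :: cross o m n) (cross o m n ++ [:: IS (o + i + n)]).
Proof.
elim: n o => [|n IH] o h1 h2; first by rewrite addn0.
rewrite /= (slide_cons _ (IS_desc_commL h1 _)); last lia.
rewrite -catA -addSn -addSnnS; apply: ibeq_cat => //.
by apply: IH; lia.
Qed.

Lemma eps_desc_commL o m : 0 < m -> o + m < N ->
  ibeq N (eps o.+1 ++ desc o m) (desc o m ++ eps o.+2).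
Proof.
case: m => // m _ h.
rewrite descSr catA (@eps_range_comm N o.+1 (desc o.+1 m) o.+2 (o.+1 + m))
  ?desc_range //; try lia.
by rewrite -!catA (@epsS o.+1) //= IS_ISiK //; lia.
Qed.

Lemma eps_cross_commL o m n : 0 < m -> o + m + n <= N ->
  ibeq N (eps o.+1 ++ cross o m n) (cross o m n ++ eps (o + n).+1).
Proof.
elim: n o => [|n IH] o h1 h2; first by rewrite cats0 addn0.
rewrite /= catA eps_desc_commL //; last lia.
by rewrite -!catA -addSnnS IH //; lia.
Qed.

Lemma IS_desc_descR o m : o + m + 1 < N ->
  ibeq N (IS (o + m).+1 :: desc o m ++ desc o.+1 m)
         ((desc o m ++ desc o.+1 m) ++ [:: IS o.+1]).
Proof.
elim: m => [|m IH] h; first by rewrite addn0.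
have e1 : o.+1 + m = (o + m).+1 by lia.
have e2 : o.+2 + m = (o + m).+2 by lia.
rewrite !descS addnS e1 e2 /=.
have slide r : ibeq N (IS (o + m).+2 :: desc o m ++ r) (desc o m ++ IS (o + m).+2 :: r).
  by apply: slide_cons; apply: (@IS_above_comm _ _ o.+1 (o + m)); rewrite ?desc_range //; lia.
rewrite -slide -braid_cons; try lia.
by apply: ibeq_cons => //; rewrite IH //; lia.
Qed.

Lemma IS_cross_commR o m n j : 0 < j < n -> o + m + n <= N ->
  ibeq N (IS (o + j + m) :: cross o m n) (cross o m n ++ [:: IS (o + j)]).
Proof.
elim: n o j => [|n IH] o j h1 h2; first lia.
rewrite /=; case: (ltnP 1 j) => hj.
- rewrite (slide_cons _ (@IS_above_comm _ _ o.+1 (o + m) _ _ _ (desc_range o m)));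
    try lia.
  rewrite -catA; apply: ibeq_cat => //.
  have -> : o + j = o.+1 + j.-1 by lia.
  by apply: IH; lia.
- have -> : j = 1 by lia.
  case: n IH h1 h2 => [|n] IH h1 h2; first lia.
  rewrite [cross o.+1 m n.+1]/= addn1 addSn catA (slide_cons _ (IS_desc_descR _)); last lia.
  rewrite -!catA; do 2 apply: ibeq_cat => //.
  by apply: (@IS_below_comm _ _ o.+3 (o.+2 + m + n).-1); rewrite ?cross_range //; lia.
Qed.

Lemma eps_desc_commR o m : o + m < N ->
  ibeq N (eps (o + m).+1 ++ desc o m) (desc o m ++ eps o.+1).
Proof.
elim: m => [|m IH] h; first by rewrite addn0 cats0.
rewrite descS addnS -addSn eps_conj ?ISi_ISK; try lia.
by apply: ibeq_cons => //; rewrite addSn IH //; lia.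
Qed.

Lemma eps_cross_commR o m n : 0 < n -> o + m + n <= N ->
  ibeq N (eps (o + m).+1 ++ cross o m n) (cross o m n ++ eps o.+1).
Proof.
case: n => // n _ h; rewrite /= catA eps_desc_commR; last lia.
rewrite -!catA; apply: ibeq_cat => //.
apply: (@eps_range_comm N o.+1 (cross o.+1 m n) o.+2 (o.+1 + m + n).-1);
  rewrite ?cross_range //; lia.
Qed.

Lemma cross_hexagon o m n p : o + m + n + p <= N ->
  ibeq N (cross o (m + n) p) (cross (o + m) n p ++ cross o m p).
Proof.
elim: p o => [|p IH] o h //=.
rewrite descD -!catA (IH o.+1); last lia.
apply: ibeq_cat => //; rewrite addSn !catA; apply: ibeq_cat => //.
apply: (@range_comm N (desc o m) _ o.+1 (o + m) (o + m).+2 ((o + m).+1 + n + p).-1);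
  rewrite ?desc_range ?cross_range //; lia.
Qed.

End Naturality.

Definition invl a := match a with IS i => ISi i | ISi i => IS i | IE => IE end.

Definition invw w := rev (map invl w).

Lemma invwK n w : all (in_range 1 n.-1) w ->
  ibeq n (w ++ invw w) [::] /\ ibeq n (invw w ++ w) [::].
Proof.
elim: w => [|a w IH] //= /andP[Ha /IH[H1 H2]].
rewrite /invw /= rev_cons -cats1 -/(invw w); split.
- by rewrite catA H1; case: a Ha => //= i Hi; rewrite ?IS_ISiK ?ISi_ISK //; lia.
- by rewrite -catA /=; case: a Ha => //= i Hi; rewrite ?IS_ISiK ?ISi_ISK //; lia.
Qed.

Lemma cross_natural_left m n a : ivalid m a ->
  ibeq (m + n) (a :: cross 0 m n) (cross 0 m n ++ shiftI n a).
Proof.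
case: a => [i|i|] /= Ha.
- by have := @IS_cross_commL (m + n) 0 m n i Ha; rewrite !add0n; apply.
- apply: conj_ISi; try lia.
  by have := @IS_cross_commL (m + n) 0 m n i Ha; rewrite !add0n; apply.
- rewrite -epsE add1n.
  by have := @eps_cross_commL (m + n) 0 m n Ha; rewrite eps1 add0n; apply.
Qed.

Lemma cross_natural_right m n b : ivalid n b ->
  ibeq (m + n) (shiftI m b ++ cross 0 m n) (cross 0 m n ++ [:: b]).
Proof.
case: b => [j|j|] /= Hb.
- by have := @IS_cross_commR (m + n) 0 m n j Hb; rewrite !add0n; apply.
- apply: conj_ISi; try lia.
  by have := @IS_cross_commR (m + n) 0 m n j Hb; rewrite !add0n; apply.
- rewrite -epsE add1n.
  by have := @eps_cross_commR (m + n) 0 m n Hb; rewrite eps1 add0n; apply.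
Qed.

Lemma cross_natural m n f g : all (ivalid m) f -> all (ivalid n) g ->
  ibeq (m + n) (f ++ shiftw m g ++ cross 0 m n) (cross 0 m n ++ g ++ shiftw n f).
Proof.
move=> Hf Hg.
have right_word : ibeq (m + n) (shiftw m g ++ cross 0 m n) (cross 0 m n ++ g).
  elim: g Hg => [|b g IH] /=; first by rewrite cats0.
  case/andP=> Hb Hg; rewrite shiftw_cons -catA IH // catA.
  by rewrite cross_natural_right // -catA.
have left_word : ibeq (m + n) (f ++ cross 0 m n) (cross 0 m n ++ shiftw n f).
  elim: f Hf => [|a f IH] /=; first by rewrite cats0.
  case/andP=> Ha Hf; rewrite IH // -[a :: _ ++ _]/((a :: cross 0 m n) ++ shiftw n f).
  by rewrite cross_natural_left // -catA.
rewrite right_word catA left_word -catA.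
by apply: ibeq_cat => //; rewrite addnC shiftw_comm.
Qed.

Lemma IB_braidingP : IB_braiding.
Proof.
have cI_range m n : all (in_range 1 (m + n).-1) (cI m n).
  by rewrite cI_cross; have := cross_range 0 m n; rewrite add0n.
split.
- exact: cI_valid.
- move=> m n; exists (invw (cI m n)); split; last exact: invwK.
  rewrite /invw all_rev all_map; apply: sub_all (cI_range m n).
  by case=> //= i; lia.
- by move=> m n f g Hf Hg; rewrite !cI_cross !muIE -catA cross_natural.
- by move=> m n p; rewrite !cI_cross !muIE cats0 shiftw_cross crossD.
- move=> m n p; rewrite !cI_cross !muIE cats0 /= shiftw_cross.
  by have := @cross_hexagon (m + n + p) 0 m n p; rewrite !add0n; apply.
Qed.

Lemma kappa_cat w w' : kappa (w ++ w') = kappa w ++ kappa w'.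
Proof. exact: map_cat. Qed.

Lemma shiftw_kappa k g : shiftw k (kappa g) = kappa (map (shiftB k) g).
Proof. by elim: g => //= -[i|i] g IH; rewrite shiftw_cons IH. Qed.

Lemma K_braided_functorP : K_braided_functor.
Proof.
split.
- by move=> n; elim=> //= -[i|i] w IH /andP[h1 /IH ->]; rewrite andbT.
- move=> n w w' _ _.
  elim=> [u v x y H | w0 | w0 w1 _ IH | w1 w2 w3 _ IH1 _ IH2].
  + rewrite !kappa_cat; apply: ibeq_step.
    by case: H => *; constructor.
  + by [].
  + by symmetry.
  + by rewrite IH1.
- by split => //; exact: kappa_cat.
- by move=> k l f g _ _; rewrite /muB muIE kappa_cat shiftw_kappa.
- move=> m n; rewrite /kappa /cB /cI map_flatten -map_comp.
  by under eq_map => j do rewrite /= -map_comp.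
Qed.

Theorem mainTheorem11 :
  IB_strict_monoidal /\ IB_braiding /\ K_braided_functor.
Proof.
split; first exact: IB_strict_monoidalP.
by split; [exact: IB_braidingP | exact: K_braided_functorP].
Qed.
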